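(* For every integer $k\ge1$, let $X_k=U_{k+1}$ and $Y_k=U_k\overset{k+2}{\sqcup}U_0$. Then $d_{\mathrm{GH}}(X_k,Y_k)\ge\frac k4$.
   Context: For metric spaces $X,Y$ and $a>0$, $X\overset{a}{\sqcup}Y$ denotes the disjoint union $Z=X\sqcup Y$ with $d_Z=d_X$ on $X$, $d_Z=d_Y$ on $Y$, and $d_Z(z,z')=a$ when one point lies in $X$ and the other in $Y$. The sequence $(U_k)_{k\ge0}$ is defined by: $U_0$ is a one-point space, $U_1$ is a two-point space with distance $1$, and $U_k=U_{k-2}\overset{k}{\sqcup}U_{k-2}$ for $k>1$. For a map $f:X\to Y$, $\operatorname{dis}(f)=\sup_{x,x'\in X}|d_X(x,x')-d_Y(f(x),f(x'))|$; for $f:X\to Y$, $g:Y\to X$, $\operatorname{codis}(f,g)=\sup_{x\in X,y\in Y}|d_X(x,g(y))-d_Y(f(x),y)|$. The Gromov--Hausdorff distance between compact metric spaces satisfies $d_{\mathrm{GH}}(X,Y)=\frac12\inf_{f:X\to Y,\,g:Y\to X}\max\{\operatorname{dis}(f),\operatorname{dis}(g),\operatorname{codis}(f,g)\}$ (equivalent to the usual definition via isometric embeddings into a common metric space). *)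

From mathcomp Require Import all_boot all_order all_algebra.
From mathcomp Require Import boolp classical_sets reals.
Set Implicit Arguments. Unset Strict Implicit. Unset Printing Implicit Defensive.
Import Order.TTheory GRing.Theory Num.Theory.
Local Open Scope ring_scope.
Local Open Scope classical_set_scope.

Record fmet (R : realType) := FMet { pt :> finType ; dst : pt -> pt -> R }.
Arguments FMet {R} pt dst.
Arguments dst {R} _ _ _.

Definition disj_union (R : realType) (X Y : fmet R) (a : R) : fmet R :=
  FMet (pt X + pt Y)%type
    (fun z z' => match z, z' with
                 | inl x, inl x' => dst X x x'
                 | inr y, inr y' => dst Y y y'
                 | _, _ => a end).

Fixpoint U (R : realType) (k : nat) : fmet R :=
  match k with
  | 0 => FMet unit (fun _ _ => 0)
  | 1 => FMet bool (fun b b' => if b == b' then 0 else 1)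
  | (j.+2) as k' => disj_union (U R j) (U R j) k'%:R
  end.

(* dis(f) = sup_{x,x'} |d(x,x') - d(f x, f x')|  (finite, nonneg. terms) *)
Definition dis (R : realType) (X Y : fmet R) (f : X -> Y) : R :=
  \big[Num.max/0]_(x : X) \big[Num.max/0]_(x' : X)
     `|dst X x x' - dst Y (f x) (f x')|.

Definition codis (R : realType) (X Y : fmet R) (f : X -> Y) (g : Y -> X) : R :=
  \big[Num.max/0]_(x : X) \big[Num.max/0]_(y : Y)
     `|dst X x (g y) - dst Y (f x) y|.

Definition dGH (R : realType) (X Y : fmet R) : R :=
  2^-1 * inf [set r : R | exists (f : X -> Y) (g : Y -> X),
                 r = Num.max (dis f) (Num.max (dis g) (codis f g))].

(* Let e = codis(f, g) and let x0 = g(y0), where y0 is the isolated point of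
   Y_k.  In U_{k+1} the distances from any point leave no gap wider than 2
   below k + 1, so if e < k/2 there is an x1 with e < d(x1, x0) <= e + 2.
   Comparing with d(f x1, y0), which is either 0 or k + 2, contradicts the
   definition of e.  Hence every correspondence has codistortion at least
   k/2, and d_GH >= k/4. *)
From mathcomp Require Import all_boot all_order all_algebra.
From mathcomp Require Import boolp classical_sets reals.
From mathcomp Require Import lra.
Import Order.TTheory GRing.Theory Num.Theory.
Local Open Scope ring_scope.

Section DistortionBounds.
Context {R : realType}.

Lemma codis_ge0 {X Y : fmet R} (f : X -> Y) (g : Y -> X) : 0 <= codis f g.
Proof. exact: bigmax_ge_id. Qed.

Lemma le_codis {X Y : fmet R} (f : X -> Y) (g : Y -> X) x y :
  `|dst X x (g y) - dst Y (f x) y| <= codis f g.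
Proof.
apply: le_trans (le_bigmax _ _ x).
exact: (le_bigmax _ (fun y => `|dst X x (g y) - dst Y (f x) y|) y).
Qed.

Lemma dGH_ge_codis {X Y : fmet R} (c : R) (x : X) (y : Y) :
  (forall (f : X -> Y) (g : Y -> X), c <= codis f g) -> 2^-1 * c <= dGH X Y.
Proof.
move=> le_c_codis; rewrite /dGH ler_pM2l ?invr_gt0 ?ltr0n //.
apply: lb_le_inf; first by eexists; exists (fun=> y), (fun=> x).
move=> _ [f [g ->]].
by rewrite !le_max le_c_codis !orbT.
Qed.

Lemma codis_to_isolated_point_ge {X Z : fmet R} {a : R} (M : R)
    (f : X -> disj_union Z (U R 0) a) (g : disj_union Z (U R 0) a -> X) :
    (forall x0 t, 0 <= t -> t < M -> exists x1, t < dst X x1 x0 <= t + 2) ->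
  a - 2 <= 2 * M -> (a - 2) / 2 <= codis f g.
Proof.
move=> dense a_le; set e := codis f g.
rewrite leNgt; apply/negP => lt_e.
have e_ge0 : 0 <= e := codis_ge0 f g.
have [x1 /andP[e_lt le_e2]] : exists x1, e < dst X x1 (g (inr tt)) <= e + 2.
  by apply: dense => //; lra.
have := le_codis f g x1 (inr tt); case: (f x1) => [z|[]] /=.
- by rewrite -/e ler_norml; lra.
- by rewrite -/e subr0 ger0_norm; lra.
Qed.

End DistortionBounds.

Lemma U_inhabited (R : realType) (m : nat) : inhabited (U R m).
Proof.
elim/ltn_ind: m => -[|[|j]] IH.
- by constructor; exact: tt.
- by constructor; exact: true.
- by have [x] := IH j (leqW (ltnSn _)); constructor; exact: inl x.
Qed.

(* U_{j+2} is two copies of U_j at mutual distance j + 2: below j we recurse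
   inside a copy, and for t in [j, j + 2) the other copy lies in the window. *)
Lemma U_dst_window (R : realType) (m : nat) (x0 : U R m) (t : R) :
  0 <= t -> t < m%:R -> exists x1 : U R m, t < dst _ x1 x0 <= t + 2.
Proof.
elim/ltn_ind: m x0 => -[|[|j]] IH x0 t_ge0 t_lt; first by lra.
  by exists (~~ x0); case: x0 t_lt => /=; lra.
have j_lt : (j < j.+2)%N by exact: leqW.
have [t_lt_j|j_le_t] := ltP t j%:R.
  by case: x0 => x0; have [x1 ?] := IH j j_lt x0 t_ge0 t_lt_j;
    [exists (inl x1) | exists (inr x1)].
have {}t_lt : t < j%:R + 2 by rewrite -addn2 natrD in t_lt.
by case: x0 => x0; [exists (inr x0) | exists (inl x0)] => /=; lra.
Qed.

Theorem lemma2 (R : realType) (k : nat) (hk : (1 <= k)%N) :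
  dGH (U R k.+1) (disj_union (U R k) (U R 0) k.+2%:R) >= k%:R / 4.
Proof.
have [x] := U_inhabited R k.+1.
pose y0 : disj_union (U R k) (U R 0) k.+2%:R := inr tt.
have k2 : k.+2%:R = k%:R + 2 :> R by rewrite -addn2 natrD.
apply: le_trans (dGH_ge_codis (k%:R / 2) x y0 _); first lra.
move=> f g; have := codis_to_isolated_point_ge k.+1%:R f g.
rewrite k2 addrK; apply; first exact: U_dst_window.
by rewrite -addn1 natrD; have := ler0n R k; lra.
Qed.
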